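(* Let $q$ be a prime power, $n=q^2-1$, and let $x\in\{0,\ldots,n-1\}$ be the minimal representative of its cyclotomic coset $I_x$. Then: $I_x$ is an FR-asymmetric coset if and only if $n-xq>x$; $I_x$ is a symmetric coset if and only if $n-xq=x$; $I_x$ is an SR-asymmetric coset if and only if $n-xq<x$ (where $n-xq$ denotes the residue of $-xq$ modulo $n$ in $\{0,\ldots,n-1\}$).
   Context: Identify $\mathbb{Z}_n$ with $\{0,\ldots,n-1\}$. The cyclotomic coset of $x$ with respect to $q$ is $I_x=\{x,\,xq\bmod n\}$; its minimal representative is its least element. The (Euclidean) reciprocal coset of $I_x$ is $I_{n-x}$ (equivalently $I_{n-qx}$). $I_x$ is symmetric if $I_{n-x}=I_x$, and asymmetric otherwise. If $I_x$ is asymmetric with reciprocal coset $I_y$, where $x,y$ are the minimal representatives and $x<y$, then $I_x$ is called the FR-asymmetric coset and $I_y$ the SR-asymmetric coset of the pair. *)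

From mathcomp Require Import all_boot.
Set Implicit Arguments. Unset Strict Implicit. Unset Printing Implicit Defensive.

(* Z_n is identified with {0,...,n-1} (nat residues). *)

Definition prime_power (q : nat) : Prop :=
  exists p k, prime p /\ 0 < k /\ q = p ^ k.

Definition cyc_coset (n q x : nat) : pred nat :=
  fun y => (y == x %% n) || (y == (x * q) %% n).

Definition min_rep (n q x : nat) : Prop :=
  x < n /\ forall y, y \in cyc_coset n q x -> x <= y.

(* representative n - x of the reciprocal coset I_{n-x}, taken in Z_n *)
Definition recip (n x : nat) : nat := (n - x %% n) %% n.

Definition symmetric_coset (n q x : nat) : Prop :=
  cyc_coset n q (recip n x) =i cyc_coset n q x.

Definition asymmetric_coset (n q x : nat) : Prop := ~ symmetric_coset n q x.

(* for x the minimal representative of I_x *)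
Definition FR_asymmetric (n q x : nat) : Prop :=
  asymmetric_coset n q x /\
  exists y, min_rep n q y /\ cyc_coset n q y =i cyc_coset n q (recip n x) /\ x < y.

Definition SR_asymmetric (n q x : nat) : Prop :=
  asymmetric_coset n q x /\
  exists y, min_rep n q y /\ cyc_coset n q y =i cyc_coset n q (recip n x) /\ y < x.

(* Since q^2 = 1 (mod n), the coset of x is {x, b} with b = xq mod n, and the
   reciprocal coset is {-x, -b} = {-x, r} with r = -xq mod n and rq = -x.
   As x <= b and negation reverses the order of nonzero residues (and fixes 0),
   r <= -x, so r is the minimal representative of the reciprocal coset.
   A coset has only one minimal representative, so the coset of x is
   symmetric iff r = x, and otherwise x is the first or the second
   representative of the pair according as x < r or r < x. *)

From mathcomp Require Import all_boot.

Set Implicit Arguments.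
Unset Strict Implicit.
Unset Printing Implicit Defensive.

Section Reciprocal.

Variable n : nat.
Hypothesis n_gt0 : 0 < n.

Lemma recip_lt y : recip n y < n.
Proof. by rewrite ltn_pmod. Qed.

Lemma recip_mod y : recip n (y %% n) = recip n y.
Proof. by rewrite /recip modn_mod. Qed.

Lemma recip_addr y : y + recip n y = 0 %[mod n].
Proof.
rewrite /recip modnDmr -modnDml subnKC ?modnn ?mod0n //.
exact: ltnW (ltn_pmod _ n_gt0).
Qed.

Lemma recip_unique y z : z < n -> y + z = 0 %[mod n] -> z = recip n y.
Proof.
move=> z_lt yz0; apply/eqP; rewrite -(modn_small z_lt) /recip.
rewrite -(eqn_modDl y) yz0 -modnDml subnKC ?modnn ?mod0n //.
exact: ltnW (ltn_pmod _ n_gt0).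
Qed.

Lemma recip_mulnl y q : (recip n y * q) %% n = recip n (y * q).
Proof.
apply: recip_unique; first by rewrite ltn_pmod.
by rewrite modnDmr -mulnDl -modnMml recip_addr mod0n mul0n mod0n.
Qed.

Lemma recip_pos y : 0 < y < n -> recip n y = n - y.
Proof.
case/andP=> y_gt0 y_lt; rewrite /recip modn_small // modn_small //.
by rewrite ltn_subrL y_gt0.
Qed.

Lemma leq_recip y z : 0 < y -> y <= z -> z < n -> recip n z <= recip n y.
Proof.
move=> y_gt0 le_yz z_lt; have y_lt := leq_ltn_trans le_yz z_lt.
rewrite !recip_pos ?y_gt0 ?(leq_trans y_gt0 le_yz) //.
exact: leq_sub2l.
Qed.

End Reciprocal.

Section CyclotomicCoset.

Variables n q : nat.
Hypothesis n_gt0 : 0 < n.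
Hypothesis sqrq_mod : q * q = 1 %[mod n].

Lemma mem_cyc_coset y z :
  y < n -> (z \in cyc_coset n q y) = (z == y) || (z == (y * q) %% n).
Proof. by move=> y_lt; rewrite unfold_in /cyc_coset /= modn_small. Qed.

Lemma cyc_coset_mod y : cyc_coset n q (y %% n) =i cyc_coset n q y.
Proof. by move=> z; rewrite !unfold_in /cyc_coset /= modn_mod modnMml. Qed.

Lemma cyc_coset_mulq y : cyc_coset n q (y * q) =i cyc_coset n q y.
Proof.
move=> z; rewrite !unfold_in /cyc_coset /= orbC.
by rewrite -mulnA -modnMmr sqrq_mod modnMmr muln1.
Qed.

Lemma min_rep_inj y z :
  min_rep n q y -> min_rep n q z -> cyc_coset n q y =i cyc_coset n q z -> y = z.
Proof.
move=> [y_lt y_min] [z_lt z_min] yz; apply/anti_leq/andP; split.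
- by apply: y_min; rewrite yz mem_cyc_coset ?eqxx.
- by apply: z_min; rewrite -yz mem_cyc_coset ?eqxx.
Qed.

Variable x : nat.
Hypothesis x_min : min_rep n q x.

Let r := recip n (x * q).

Lemma cyc_coset_recip_mulq : cyc_coset n q r =i cyc_coset n q (recip n x).
Proof.
by move=> z; rewrite /r -recip_mulnl // cyc_coset_mod cyc_coset_mulq.
Qed.

Lemma recip_mulq_le : r <= recip n x.
Proof.
have [x_lt x_le_coset] := x_min; rewrite /r -recip_mod.
have [-> | x_gt0] := posnP x; first by rewrite mul0n mod0n.
apply: leq_recip => //; last exact: ltn_pmod.
by apply: x_le_coset; rewrite mem_cyc_coset ?eqxx ?orbT.
Qed.

Lemma min_rep_recip_mulq : min_rep n q r.
Proof.
split=> [|z]; first exact: recip_lt.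
rewrite mem_cyc_coset ?recip_lt // => /orP[/eqP -> // | /eqP ->].
rewrite recip_mulnl // -mulnA -recip_mod // -modnMmr sqrq_mod modnMmr muln1.
by rewrite recip_mod // recip_mulq_le.
Qed.

Lemma symmetric_cosetE : symmetric_coset n q x <-> r = x.
Proof.
split=> [sym_x | r_x z]; first last.
  by rewrite -cyc_coset_recip_mulq r_x.
apply: min_rep_inj min_rep_recip_mulq x_min _ => z.
by rewrite cyc_coset_recip_mulq sym_x.
Qed.

Lemma min_rep_recip_coset y :
  min_rep n q y -> cyc_coset n q y =i cyc_coset n q (recip n x) -> y = r.
Proof.
move=> y_min y_recip; apply: min_rep_inj y_min min_rep_recip_mulq _ => z.
by rewrite y_recip cyc_coset_recip_mulq.
Qed.

Lemma FR_asymmetricE : FR_asymmetric n q x <-> x < r.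
Proof.
split=> [[_ [y [y_min [y_recip lt_xy]]]] | lt_xr].
  by rewrite -(min_rep_recip_coset y_min y_recip).
split; first by move=> /symmetric_cosetE r_x; rewrite r_x ltnn in lt_xr.
exists r; split; first exact: min_rep_recip_mulq.
by split; first exact: cyc_coset_recip_mulq.
Qed.

Lemma SR_asymmetricE : SR_asymmetric n q x <-> r < x.
Proof.
split=> [[_ [y [y_min [y_recip lt_yx]]]] | lt_rx].
  by rewrite -(min_rep_recip_coset y_min y_recip).
split; first by move=> /symmetric_cosetE r_x; rewrite r_x ltnn in lt_rx.
exists r; split; first exact: min_rep_recip_mulq.
by split; first exact: cyc_coset_recip_mulq.
Qed.

End CyclotomicCoset.

Lemma sqrn_mod_pred_sqr q : 0 < q -> q * q = 1 %[mod q ^ 2 - 1].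
Proof.
move=> q_gt0; rewrite mulnn -{1}(@subnK 1 (q ^ 2)) ?expn_gt0 ?q_gt0 //.
by rewrite modnDl.
Qed.

Theorem mainTheorem5 (q x : nat) :
  prime_power q ->
  min_rep (q ^ 2 - 1) q x ->
  let n := q ^ 2 - 1 in
  let r := (n - (x * q) %% n) %% n in
  [/\ FR_asymmetric n q x <-> x < r,
      symmetric_coset n q x <-> r = x
    & SR_asymmetric n q x <-> r < x].
Proof.
move=> _ x_min n r; have n_gt0 : 0 < n := leq_ltn_trans (leq0n x) x_min.1.
have q_gt0 : 0 < q.
  by rewrite lt0n; apply: contraTneq n_gt0 => q0; rewrite /n q0.
have sqrq_mod := sqrn_mod_pred_sqr q_gt0.
by split; [exact: FR_asymmetricE | exact: symmetric_cosetE | exact: SR_asymmetricE].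
Qed.
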